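(* Let $K,N_\text{t}\ge1$, let $\mathbf{h}_1,\dots,\mathbf{h}_K\in\mathbb{C}^{N_\text{t}}$, let $\mathbf{H}\triangleq[\mathbf{h}_1,\dots,\mathbf{h}_K]\in\mathbb{C}^{N_\text{t}\times K}$ and let $\mathcal{S}\triangleq\mathrm{col}(\mathbf{H})$ be its column space. Let $\lambda\in[0,1]$, $T_w>0$, $\eta_{\mathrm{BS}}\in(0,1]$, $P_{w,0}>0$, $P_{w,\max}>0$, $a_{\max}>0$, $\beta_{\max}>0$, and for each $k$ let $u_k>0$ and $\chi_k\ge0$. Consider the problem (P2) \[ \underset{\mathbf{f}\in\mathbb{C}^{N_\text{t}}}{\text{minimize}}~F(\mathbf{f})\triangleq\lambda\frac{T_w}{\eta_{\mathrm{BS}}}P_{w,0}\|\mathbf{f}\|_2^2+(1-\lambda)\sum_{k=1}^K\frac{\chi_k}{|\mathbf{h}_k^{\mathsf H}\mathbf{f}|^2} \] subject to $|\mathbf{h}_k^{\mathsf H}\mathbf{f}|^2\ge u_k^2/\beta_{\max}^2$ for all $k$, $P_{w,0}\|\mathbf{f}\|_2^2\le P_{w,\max}$, and $|\mathbf{h}_k^{\mathsf H}\mathbf{f}|\le a_{\max}$ for all $k$. For any point $\mathbf{f}^{(i)}\in\mathbb{C}^{N_\text{t}}$, write $a_k^{(i)}=\mathbf{h}_k^{\mathsf H}\mathbf{f}^{(i)}$ and define the affine function \[ \underline{u}_k^{(i)}(\mathbf{f})\triangleq|a_k^{(i)}|^2+2\Re\{(a_k^{(i)})^\ast(\mathbf{h}_k^{\mathsf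 H}\mathbf{f}-a_k^{(i)})\}, \] and consider the subproblem (P2-SCA) \[ \underset{\mathbf{f}\in\mathbb{C}^{N_\text{t}}}{\text{minimize}}~\lambda\frac{T_w}{\eta_{\mathrm{BS}}}P_{w,0}\|\mathbf{f}\|_2^2+(1-\lambda)\sum_{k=1}^K\frac{\chi_k}{\underline{u}_k^{(i)}(\mathbf{f})} \] subject to $\underline{u}_k^{(i)}(\mathbf{f})\ge u_k^2/\beta_{\max}^2$ for all $k$, $P_{w,0}\|\mathbf{f}\|_2^2\le P_{w,\max}$, and $|\mathbf{h}_k^{\mathsf H}\mathbf{f}|\le a_{\max}$ for all $k$. Then: if (P2) is feasible, its minimum value is attained and at least one minimizer lies in $\mathcal{S}$. Moreover, for any $\mathbf{f}^{(i)}$, if (P2-SCA) is feasible, it has a minimizer in $\mathcal{S}$.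
   Context: $(\cdot)^{\mathsf H}$ denotes Hermitian transpose, $(\cdot)^\ast$ complex conjugate, $\Re\{\cdot\}$ real part, $\|\cdot\|_2$ the Euclidean norm. In the paper, $\chi_k=c_ku_k^2$ with $c_k>0$, $\mathbf{f}$ is the BS beamformer, and $\mathbf{f}^{(i)}$ is the current iterate of a successive convex approximation scheme. *)

From HB Require Import structures.
From mathcomp Require Import all_boot all_order all_algebra.
From mathcomp Require Import complex.
From mathcomp Require Import reals.
Set Implicit Arguments. Unset Strict Implicit. Unset Printing Implicit Defensive.
Import Order.TTheory GRing.Theory Num.Theory.
Local Open Scope ring_scope.

(* Vectors in C^Nt are column vectors 'cV[R[i]]_Nt,
   H is the Nt x K channel matrix whose k-th column is h_k. *)

Section Defs.
Variable R : realType.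
Local Notation C := (R[i]).

Definition sqmod (z : C) : R := complex.Re z ^+ 2 + complex.Im z ^+ 2.
Definition cmod (z : C) : R := Num.sqrt (sqmod z).

Variables (Nt K : nat).

Definition sqnorm (f : 'cV[C]_Nt) : R := \sum_(j < Nt) sqmod (f j 0).

Definition hHf (H : 'M[C]_(Nt, K)) (f : 'cV[C]_Nt) (k : 'I_K) : C :=
  \sum_(j < Nt) conjc (H j k) * f j 0.

Definition in_colspace (H : 'M[C]_(Nt, K)) (f : 'cV[C]_Nt) : Prop :=
  exists c : 'cV[C]_K, f = H *m c.

Definition is_minimizer (feas : 'cV[C]_Nt -> Prop) (obj : 'cV[C]_Nt -> R)
  (f : 'cV[C]_Nt) : Prop :=
  feas f /\ forall g, feas g -> obj f <= obj g.

Variables (H : 'M[C]_(Nt, K)) (lam Tw eta Pw0 Pwmax amax betamax : R)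
  (u chi : 'I_K -> R).

Definition F_P2 (f : 'cV[C]_Nt) : R :=
  lam * (Tw / eta) * Pw0 * sqnorm f
  + (1 - lam) * \sum_(k < K) chi k / sqmod (hHf H f k).

Definition feas_P2 (f : 'cV[C]_Nt) : Prop :=
  (forall k, sqmod (hHf H f k) >= u k ^+ 2 / betamax ^+ 2)
  /\ Pw0 * sqnorm f <= Pwmax
  /\ (forall k, cmod (hHf H f k) <= amax).

Definition ulow (fi : 'cV[C]_Nt) (f : 'cV[C]_Nt) (k : 'I_K) : R :=
  let a := hHf H fi k in
  sqmod a + 2 * complex.Re (conjc a * (hHf H f k - a)).

Definition F_SCA (fi : 'cV[C]_Nt) (f : 'cV[C]_Nt) : R :=
  lam * (Tw / eta) * Pw0 * sqnorm f
  + (1 - lam) * \sum_(k < K) chi k / ulow fi f k.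

Definition feas_SCA (fi : 'cV[C]_Nt) (f : 'cV[C]_Nt) : Prop :=
  (forall k, ulow fi f k >= u k ^+ 2 / betamax ^+ 2)
  /\ Pw0 * sqnorm f <= Pwmax
  /\ (forall k, cmod (hHf H f k) <= amax).

End Defs.

From HB Require Import structures.
From mathcomp Require Import all_boot all_order all_algebra.
From mathcomp Require Import complex reals lra.
From mathcomp Require Import boolp classical_sets functions.
From mathcomp Require Import topology normedtype derive realfun.
Set Implicit Arguments.
Unset Strict Implicit.
Unset Printing Implicit Defensive.
Import Order.TTheory GRing.Theory Num.Theory.
Import numFieldNormedType.Exports.
Local Open Scope ring_scope.
Local Open Scope classical_set_scope.

(* Both problems have the form: minimize al ||f||^2 + be sum_k chi_k / D_k(f)
   over a feasible set on which D_k(f) >= c_k > 0, where D_k(f) depends on f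
   only through h_k^H f. The feasible set is closed and, by the power
   constraint, bounded, and the objective is continuous on it, so a minimizer
   exists. Replacing a minimizer f by its orthogonal projection onto col(H)
   keeps every h_k^H f and cannot increase ||f||^2 (Pythagoras), so the
   projection is still feasible and still a minimizer. *)

Local Notation Re := complex.Re.
Local Notation Im := complex.Im.
Local Notation "A ^H" := (trmx (map_mx conjc A)) (at level 8, format "A ^H").

Section ComplexModulus.
Variable R : realType.
Implicit Types x y : R[i].

Lemma Re_conjM x y : Re (conjc x * y) = Re x * Re y + Im x * Im y.
Proof. by case: x => a b; case: y => c d /=; lra. Qed.

Lemma Im_conjM x y : Im (conjc x * y) = Re x * Im y - Im x * Re y.
Proof. by case: x => a b; case: y => c d /=; lra. Qed.

Lemma sqmod_ge0 x : 0 <= sqmod x.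
Proof. by rewrite /sqmod addr_ge0 ?sqr_ge0. Qed.

Lemma sqmod_eq0 x : sqmod x = 0 -> x = 0.
Proof.
case: x => a b; rewrite /sqmod /= => /eqP.
by rewrite paddr_eq0 ?sqr_ge0 // !sqrf_eq0 => /andP[/eqP-> /eqP->].
Qed.

Lemma sqmodD x y : sqmod (x + y) = sqmod x + sqmod y + 2 * Re (conjc x * y).
Proof. by rewrite /sqmod !raddfD /= Re_conjM; lra. Qed.

Lemma mulcJ_sqmod x : x * conjc x = (sqmod x)%:C%C.
Proof.
case: x => a b; apply/eqP; rewrite eq_complex /sqmod /=.
by apply/andP; split; apply/eqP; lra.
Qed.

End ComplexModulus.

Section ColumnSpace.
Variable R : realType.

Lemma mulmx_adj_eq0 m n (A : 'M[R[i]]_(m, n)) : A *m A^H = 0 -> A = 0.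
Proof.
move=> AAH0; apply/matrixP => i j; rewrite mxE.
have /matrixP /(_ i i) := AAH0; rewrite !mxE.
under eq_bigr => k _ do rewrite !mxE mulcJ_sqmod.
rewrite -(rmorph_sum (real_complex R)) => /complexI /eqP.
rewrite psumr_eq0; last by move=> k _; exact: sqmod_ge0.
by move/allP/(_ j (mem_index_enum _))/implyP/(_ isT)/eqP/sqmod_eq0.
Qed.

Variables (Nt K : nat) (H : 'M[R[i]]_(Nt, K)).

(* Transposed, this says that the rows of conj H lie in the row space of the
   Gram matrix H^T conj H, which has the same rank as conj H. *)
Lemma normal_equations_solvable (f : 'cV[R[i]]_Nt) :
  exists c : 'cV_K, H^H *m (H *m c) = H^H *m f.
Proof.
set A := H^T; set B := map_mx conjc H.
have capA_kerB : (A :&: kermx B)%MS = 0.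
  have [w defw] := submxP (capmxSl A (kermx B)).
  have wAB0 : w *m A *m B = 0 by apply/sub_kermxP; rewrite -defw capmxSr.
  rewrite defw; apply: mulmx_adj_eq0.
  by rewrite map_mxM trmx_mul map_trmx trmxK mulmxA wAB0 mul0mx.
have rankAB : \rank (A *m B) = \rank B.
  have := mxrank_mul_ker A B; rewrite capA_kerB mxrank0 addn0 => ->.
  by rewrite mxrank_tr mxrank_map.
have B_sub_AB : (B <= A *m B)%MS.
  by rewrite -(eq_leqif (mxrank_leqif_sup (submxMl A B))) rankAB.
have [d fBd] := submxP (submx_trans (submxMl f^T B) B_sub_AB).
exists d^T; apply: trmx_inj.
by rewrite !trmx_mul !trmxK fBd mulmxA.
Qed.

Lemma hHfE f k : hHf H f k = (H^H *m f) k 0.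
Proof. by rewrite /hHf mxE; apply: eq_bigr => j _; rewrite !mxE. Qed.

Lemma sqnormD_orth (g w : 'cV[R[i]]_Nt) :
  g^H *m w = 0 -> sqnorm (g + w) = sqnorm g + sqnorm w.
Proof.
move=> gw0; rewrite /sqnorm.
under eq_bigr => j _ do rewrite mxE sqmodD.
rewrite !big_split /= -mulr_sumr -raddf_sum.
have -> : \sum_(j < Nt) conjc (g j 0) * w j 0 = (g^H *m w) 0 0.
  by rewrite mxE; apply: eq_bigr => j _; rewrite !mxE.
by rewrite gw0 mxE mulr0 addr0.
Qed.

Lemma colspace_projection f : exists2 g, in_colspace H g &
  hHf H g =1 hHf H f /\ sqnorm g <= sqnorm f.
Proof.
have [c Hc] := normal_equations_solvable f.
have orth : (H *m c)^H *m (f - H *m c) = 0.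
  by rewrite map_mxM trmx_mul -mulmxA mulmxBr Hc subrr mulmx0.
exists (H *m c); first by exists c.
split=> [k|]; first by rewrite !hHfE Hc.
have -> : f = H *m c + (f - H *m c) by rewrite addrC subrK.
rewrite sqnormD_orth // lerDl.
by rewrite sumr_ge0 // => j _; exact: sqmod_ge0.
Qed.

End ColumnSpace.

Lemma continuous_sum (K : numFieldType) (V : normedModType K)
    (T : topologicalType) (I : Type) (r : seq I) (F : I -> T -> V) x :
  (forall i, {for x, continuous (F i)}) ->
  {for x, continuous (fun y => \sum_(i <- r) F i y)}.
Proof.
move=> cF; rewrite -fct_sumE.
apply: (big_ind (fun g : T -> V => {for x, continuous g})) => //.
- exact: cst_continuous.
- by move=> g h cg ch; exact: continuousD.
Qed.

Lemma closed_forall (T : topologicalType) (I : Type) (P : I -> set T) :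
  (forall i, closed (P i)) -> closed [set x | forall i, P i x].
Proof.
move=> cP; have := closed_bigI (D := setT) (fun i _ => cP i).
by congr closed; apply/seteqP; split=> x /= Px i //; exact: Px.
Qed.

Section RealCoordinates.
Variables (R : realType) (Nt K : nat) (H : 'M[R[i]]_(Nt, K)).

Definition uncoords (x : 'rV[R]_(Nt + Nt)) : 'cV[R[i]]_Nt :=
  \col_j (x ord0 (lshift Nt j) +i* x ord0 (rshift Nt j))%C.

Definition coords (f : 'cV[R[i]]_Nt) : 'rV[R]_(Nt + Nt) :=
  row_mx (\row_j Re (f j 0)) (\row_j Im (f j 0)).

Lemma coordsK : cancel coords uncoords.
Proof.
move=> f; apply/matrixP => j i; rewrite mxE row_mxEl row_mxEr !mxE (ord1 i).
by case: (f j 0).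
Qed.

Lemma sqnorm_uncoords x :
  sqnorm (uncoords x) = \sum_(i < Nt + Nt) x ord0 i ^+ 2.
Proof.
rewrite big_split_ord /sqnorm /= -big_split; apply: eq_bigr => j _.
by rewrite mxE.
Qed.

Lemma continuous_sqnorm : continuous (fun x => sqnorm (uncoords x)).
Proof.
rewrite (funext sqnorm_uncoords) => x.
apply: continuous_sum => i; rewrite /GRing.exp /=.
by apply: continuousM; exact: coord_continuous.
Qed.

Lemma continuous_Re_hHf k : continuous (fun x => Re (hHf H (uncoords x) k)).
Proof.
have ReE_coords y : Re (hHf H (uncoords y) k) =
    \sum_(j < Nt) (Re (H j k) * y ord0 (lshift Nt j)
                   + Im (H j k) * y ord0 (rshift Nt j)).
  by rewrite raddf_sum; apply: eq_bigr => j _; rewrite /= Re_conjM mxE.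
rewrite (funext ReE_coords) => x.
by apply: continuous_sum => j; apply: continuousD; apply: continuousM;
  [exact: cst_continuous | exact: coord_continuous
  |exact: cst_continuous | exact: coord_continuous].
Qed.

Lemma continuous_Im_hHf k : continuous (fun x => Im (hHf H (uncoords x) k)).
Proof.
have ImE_coords y : Im (hHf H (uncoords y) k) =
    \sum_(j < Nt) (Re (H j k) * y ord0 (rshift Nt j)
                   - Im (H j k) * y ord0 (lshift Nt j)).
  by rewrite raddf_sum; apply: eq_bigr => j _; rewrite /= Im_conjM mxE.
rewrite (funext ImE_coords) => x.
by apply: continuous_sum => j; apply: continuousB; apply: continuousM;
  [exact: cst_continuous | exact: coord_continuous
  |exact: cst_continuous | exact: coord_continuous].
Qed.

Lemma continuous_sqmod_hHf k :
  continuous (fun x => sqmod (hHf H (uncoords x) k)).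
Proof.
(* The domain is given explicitly because [continuous] in the statement only
   elaborates it as an nbhsType. *)
rewrite /sqmod => x; apply: (continuousD (T := 'rV[R]_(Nt + Nt)));
  by apply: continuousM;
  (exact: continuous_Re_hHf || exact: continuous_Im_hHf).
Qed.

Lemma continuous_cmod_hHf k :
  continuous (fun x => cmod (hHf H (uncoords x) k)).
Proof.
move=> x; apply: continuous_comp; first exact: continuous_sqmod_hHf.
exact: sqrt_continuous.
Qed.

Lemma continuous_ulow fi k : continuous (fun x => ulow H fi (uncoords x) k).
Proof.
set a := hHf H fi k.
have ulowE_coords y : ulow H fi (uncoords y) k = sqmod a + 2 *
    (Re a * (Re (hHf H (uncoords y) k) - Re a) +
     Im a * (Im (hHf H (uncoords y) k) - Im a)).
  by rewrite /ulow Re_conjM !raddfB.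
rewrite (funext ulowE_coords) => x.
apply: (continuousD (T := 'rV[R]_(Nt + Nt))); first exact: cst_continuous.
apply: continuousM; first exact: cst_continuous.
by apply: continuousD; apply: continuousM; try exact: cst_continuous;
  apply: continuousB; try exact: cst_continuous;
  (exact: continuous_Re_hHf || exact: continuous_Im_hHf).
Qed.

Lemma bounded_sqnorm_le r :
  bounded_set [set x : 'rV[R]_(Nt + Nt) | sqnorm (uncoords x) <= r].
Proof.
exists (1 + r); split; first exact: num_real.
move=> M ltM x /= xr; change (mx_norm x <= M); rewrite mx_normrE.
have r_ge0 : 0 <= r.
  by apply: le_trans xr; rewrite sumr_ge0 // => j _; exact: sqmod_ge0.
apply: bigmax_le => [|[a i] _]; first lra.
have xi2_le : `|x ord0 i| ^+ 2 <= r.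
  rewrite real_normK ?num_real //; apply: le_trans xr.
  rewrite sqnorm_uncoords (bigD1 i) //= lerDl.
  by rewrite sumr_ge0 // => ? _; exact: sqr_ge0.
by rewrite /= (ord1 a); have := normr_ge0 (x ord0 i); nra.
Qed.

End RealCoordinates.

Section GenericProblem.
Variables (R : realType) (Nt K : nat) (H : 'M[R[i]]_(Nt, K)).
Variables (D : 'I_K -> 'cV[R[i]]_Nt -> R) (c : 'I_K -> R).
Variables (Pw0 Pwmax amax al be : R) (chi : 'I_K -> R).

Definition feas_D (f : 'cV[R[i]]_Nt) : Prop :=
  (forall k, c k <= D k f) /\ Pw0 * sqnorm f <= Pwmax
  /\ (forall k, cmod (hHf H f k) <= amax).

Definition F_D (f : 'cV[R[i]]_Nt) : R :=
  al * sqnorm f + be * \sum_(k < K) chi k / D k f.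

Hypothesis D_continuous : forall k, continuous (fun x => D k (uncoords x)).
Hypothesis c_gt0 : forall k, 0 < c k.
Hypothesis Pw0_gt0 : 0 < Pw0.

Lemma closed_feas_D : closed [set x | feas_D (uncoords x)].
Proof.
have closed_le_fun (g : 'rV[R]_(Nt + Nt) -> R) a :
    continuous g -> closed [set x | g x <= a].
  move=> cg; apply: (preimage_closed (D := [set r | r <= a])).
    by move=> x _; exact: cg.
  exact: closed_le.
change (closed ([set x | forall k, c k <= D k (uncoords x)] `&`
  ([set x | Pw0 * sqnorm (uncoords x) <= Pwmax] `&`
   [set x | forall k, cmod (hHf H (uncoords x) k) <= amax]))).
apply: closedI; [apply: closed_forall => k | apply: closedI].
- apply: (preimage_closed (D := [set r | c k <= r])); last exact: closed_ge.
  by move=> x _; exact: D_continuous.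
- apply: closed_le_fun => x; apply: continuousM; first exact: cst_continuous.
  exact: continuous_sqnorm.
- apply: closed_forall => k; apply: closed_le_fun.
  exact: continuous_cmod_hHf.
Qed.

Lemma bounded_feas_D : bounded_set [set x | feas_D (uncoords x)].
Proof.
have [M [Mreal MP]] := bounded_sqnorm_le Nt (Pwmax / Pw0).
exists M; split=> // N ltMN x [_ [powx _]]; apply: (MP N ltMN).
by rewrite /= ler_pdivlMr // mulrC.
Qed.

Lemma continuous_F_D : {within [set x | feas_D (uncoords x)],
  continuous (fun x => F_D (uncoords x))}.
Proof.
apply: continuous_in_subspaceT => x; rewrite inE => -[cD _].
apply: (continuousD (T := 'rV[R]_(Nt + Nt))).
  by apply: continuousM; [exact: cst_continuous | exact: continuous_sqnorm].
apply: continuousM; first exact: cst_continuous.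
apply: continuous_sum => k; apply: continuousM; first exact: cst_continuous.
apply: continuousV; last exact: D_continuous.
by rewrite gt_eqF // (lt_le_trans (c_gt0 k)).
Qed.

Lemma exists_minimizer_D :
  (exists f, feas_D f) -> exists f, is_minimizer feas_D F_D f.
Proof.
move=> [f0 feas_f0].
have nonempty : [set x | feas_D (uncoords x)] !=set0.
  by exists (coords f0); rewrite /= coordsK.
have [x feas_x x_min] := EVT_min_rV nonempty
  (bounded_closed_compact bounded_feas_D closed_feas_D) continuous_F_D.
exists (uncoords x); split=> [|g feas_g]; first by rewrite inE in feas_x.
by rewrite -(coordsK g); apply: x_min; rewrite inE /= coordsK.
Qed.

Hypothesis D_hHf : forall f g k, hHf H f =1 hHf H g -> D k f = D k g.
Hypothesis al_ge0 : 0 <= al.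

Lemma exists_minimizer_D_colspace : (exists f, feas_D f) ->
  exists f, is_minimizer feas_D F_D f /\ in_colspace H f.
Proof.
move=> /exists_minimizer_D[f [[c_f [pow_f amax_f]] f_min]].
have [g g_col [hHf_gf sqnorm_gf]] := colspace_projection H f.
have Dgf k : D k g = D k f by exact: D_hHf.
have F_gf : F_D g <= F_D f.
  rewrite /F_D (eq_bigr (fun k => chi k / D k f)) => [|k _]; last first.
    by rewrite Dgf.
  by rewrite lerD2r ler_wpM2l.
exists g; split=> //; split=> [|h feas_h];
  last exact: le_trans F_gf (f_min h feas_h).
split=> [k|]; first by rewrite Dgf.
split=> [|k]; last by rewrite hHf_gf.
by apply: le_trans pow_f; rewrite ler_pM2l.
Qed.

End GenericProblem.

Theorem lemma2 (R : realType) (K Nt : nat) (hK : (0 < K)%N) (hNt : (0 < Nt)%N)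
  (H : 'M[R[i]]_(Nt, K))
  (lam Tw eta Pw0 Pwmax amax betamax : R) (u chi : 'I_K -> R)
  (hlam0 : 0 <= lam) (hlam1 : lam <= 1) (hTw : 0 < Tw)
  (heta0 : 0 < eta) (heta1 : eta <= 1) (hPw0 : 0 < Pw0) (hPwmax : 0 < Pwmax)
  (hamax : 0 < amax) (hbeta : 0 < betamax)
  (hu : forall k, 0 < u k) (hchi : forall k, 0 <= chi k) :
  ((exists f, feas_P2 H Pw0 Pwmax amax betamax u f) ->
   exists f, is_minimizer (feas_P2 H Pw0 Pwmax amax betamax u)
                          (F_P2 H lam Tw eta Pw0 chi) f
             /\ in_colspace H f)
  /\
  (forall fi : 'cV[R[i]]_Nt,
     (exists f, feas_SCA H Pw0 Pwmax amax betamax u fi f) ->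
     exists f, is_minimizer (feas_SCA H Pw0 Pwmax amax betamax u fi)
                            (F_SCA H lam Tw eta Pw0 chi fi) f
               /\ in_colspace H f).
Proof.
have c_gt0 k : 0 < u k ^+ 2 / betamax ^+ 2 by rewrite divr_gt0 ?exprn_gt0.
have al_ge0 : 0 <= lam * (Tw / eta) * Pw0.
  by apply: mulr_ge0; [apply: mulr_ge0; [|apply: divr_ge0] | ]; rewrite // ltW.
split=> [|fi].
  apply: (exists_minimizer_D_colspace (D := fun k f => sqmod (hHf H f k))
    (1 - lam) chi (continuous_sqmod_hHf (H := H)) c_gt0 hPw0 _ al_ge0).
  by move=> f g k hHf_fg; rewrite /= hHf_fg.
apply: (exists_minimizer_D_colspace (D := fun k f => ulow H fi f k)
  (1 - lam) chi (continuous_ulow (H := H) (fi := fi)) c_gt0 hPw0 _ al_ge0).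
by move=> f g k hHf_fg; rewrite /ulow hHf_fg.
Qed.
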